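(* Let $m\in\mathbb{N}$, $a>-1$, and $Q(x)=(x^{4}+2ax^{2}+1)^{-(m+1)}$. For real $y$ define $$Q_{1}(y)=\Big[Q\big(y+\sqrt{y^{2}+1}\big)+Q\big(y-\sqrt{y^{2}+1}\big)\Big]+\frac{y}{\sqrt{y^{2}+1}}\Big[Q\big(y+\sqrt{y^{2}+1}\big)-Q\big(y-\sqrt{y^{2}+1}\big)\Big].$$ Then $$Q_{1}(y)=\frac{T_{m}(2y)}{2^{m}(1+a+2y^{2})^{m+1}},\qquad\text{where } T_{m}(y)=\sum_{k=0}^{m}\binom{m+k}{m-k}y^{2k}.$$ *)

From Stdlib Require Import Reals.
Open Scope R_scope.

Definition Qf (m : nat) (a x : R) : R :=
  / (x ^ 4 + 2 * a * x ^ 2 + 1) ^ (S m).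

Definition Q1 (m : nat) (a y : R) : R :=
  let s := sqrt (y ^ 2 + 1) in
  (Qf m a (y + s) + Qf m a (y - s))
  + (y / s) * (Qf m a (y + s) - Qf m a (y - s)).

(* T_m(y) = sum_{k=0}^m binom(m+k, m-k) y^(2k); binomial = Stdlib Reals' C
   (here always m-k <= m+k, so C is the usual binomial coefficient) *)
Definition Tm (m : nat) (y : R) : R :=
  sum_f_R0 (fun k => C (m + k) (m - k) * y ^ (2 * k)) m.

(* Put s = sqrt(y^2+1), u = y + s and v = y - s, so that u + v = 2y and
   u v = -1.  The proof combines three facts.

   1. Conjugation: if u v = -1 then u^4 + 2a u^2 + 1 = u^2 (u^2 + v^2 + 2a),
      hence Q(u) = v^(2m+2) / D^(m+1) with D = u^2 + v^2 + 2a, and D is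
      symmetric in u, v; here D = 2 (1 + a + 2y^2).
   2. The bracket combination defining Q_1 then collapses to
      (u^(2m+1) - v^(2m+1)) / (s D^(m+1)).
   3. Fibonacci polynomials F_0 = 0, F_1 = 1, F_(n+2) = x F_(n+1) + F_n
      satisfy u^n - v^n = (u - v) F_n(u + v) whenever u v = -1, and their
      odd-indexed members are the polynomials of the statement:
      F_(2m+1)(x) = T_m(x).  The latter is proved simultaneously with the
      companion formula for F_(2m+2), by Pascal's rule on a recursively
      defined binomial triangle (which agrees with Stdlib's C in range).
   The theorem follows since u - v = 2s. *)

From Stdlib Require Import Reals Lra Lia.
Open Scope R_scope.

(* Pascal's triangle defined by its recursion; unlike the factorial
   formula [C], it vanishes above the diagonal. *)
Fixpoint binom (n k : nat) : R :=
  match n, k with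
  | O, O => 1
  | O, S _ => 0
  | S _, O => 1
  | S n', S k' => binom n' k' + binom n' (S k')
  end.

Lemma binom_n0 (n : nat) : binom n 0 = 1.
Proof. destruct n; reflexivity. Qed.

(* Entries above the diagonal vanish; this absorbs boundary terms in
   the diagonal sums below. *)
Lemma binom_above (n k : nat) : (n < k)%nat -> binom n k = 0.
Proof.
  revert k; induction n as [|n IH]; intros k Hk; destruct k; try lia; simpl; auto.
  rewrite !IH by lia; ring.
Qed.

Lemma C_n0 (n : nat) : C n 0 = 1.
Proof. unfold C; rewrite Nat.sub_0_r; simpl; field; apply INR_fact_neq_0. Qed.

Lemma C_nn (n : nat) : C n n = 1.
Proof. unfold C; rewrite Nat.sub_diag; simpl; field; apply INR_fact_neq_0. Qed.

Lemma binom_C (n k : nat) : (k <= n)%nat -> binom n k = C n k.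
Proof.
  revert k; induction n as [|n IH]; intros k Hk.
  - destruct k; [|lia]. simpl; rewrite C_n0; reflexivity.
  - destruct k as [|k]; [rewrite binom_n0, C_n0; reflexivity|].
    simpl. destruct (Nat.eq_dec k n) as [->|Hne].
    + rewrite IH, binom_above, !C_nn by lia; ring.
    + rewrite !IH by lia; apply pascal; lia.
Qed.

Fixpoint fibpoly (x : R) (n : nat) : R :=
  match n with
  | O => 0
  | S n' =>
      match n' with
      | O => 1
      | S n'' => x * fibpoly x n' + fibpoly x n''
      end
  end.

Lemma fibpoly_SS (x : R) (n : nat) :
  fibpoly x (S (S n)) = x * fibpoly x (S n) + fibpoly x n.
Proof. reflexivity. Qed.

(* Binet-type formula for a pair of roots of t^2 - x t - 1. *)
Lemma fibpoly_binet (u v : R) (n : nat) :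
  u * v = -1 -> u ^ n - v ^ n = (u - v) * fibpoly (u + v) n.
Proof.
  intros Huv.
  assert (Hpair : forall k, u ^ k - v ^ k = (u - v) * fibpoly (u + v) k /\
                  u ^ S k - v ^ S k = (u - v) * fibpoly (u + v) (S k)).
  { induction k as [|k [IH0 IH1]]; [simpl; split; ring|].
    split; [exact IH1|].
    rewrite fibpoly_SS, Rmult_plus_distr_l, <- Rmult_assoc,
      (Rmult_comm (u - v)), Rmult_assoc, <- IH0, <- IH1.
    replace (u ^ k - v ^ k) with (- (u * v) * (u ^ k - v ^ k)) by (rewrite Huv; ring).
    simpl; ring. }
  apply Hpair.
Qed.

(* The binomial sums expected for odd- and even-indexed Fibonacci
   polynomials. *)
Definition fib_odd_sum (x : R) (m : nat) : R :=
  sum_f_R0 (fun k => binom (m + k) (m - k) * x ^ (2 * k)) m.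

Definition fib_even_sum (x : R) (m : nat) : R :=
  sum_f_R0 (fun k => binom (S m + k) (m - k) * x ^ (2 * k + 1)) m.

(* Pascal's rule, summed along a diagonal. *)
Lemma fib_odd_sum_S (x : R) (m : nat) :
  fib_odd_sum x (S m) = fib_odd_sum x m + x * fib_even_sum x m.
Proof.
  unfold fib_odd_sum, fib_even_sum. rewrite tech5.
  rewrite (sum_eq _ (fun k => binom (m + k) (m - k) * x ^ (2 * k)
                            + binom (m + k) (S m - k) * x ^ (2 * k))).
  2:{ intros i Hi. replace (S m + i)%nat with (S (m + i)) by lia.
      replace (S m - i)%nat with (S (m - i)) by lia. simpl binom; ring. }
  rewrite sum_plus, Rplus_assoc; f_equal.
  set (h := fun k => binom (m + k) (S m - k) * x ^ (2 * k)).
  replace (binom (S m + S m) (S m - S m) * x ^ (2 * S m)) with (h (S m))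
    by (unfold h; replace (S m - S m)%nat with 0%nat by lia; rewrite !binom_n0; reflexivity).
  rewrite <- tech5, decomp_sum by lia; simpl pred.
  unfold h at 1; rewrite Nat.add_0_r, binom_above by lia.
  rewrite Rmult_0_l, Rplus_0_l, scal_sum. apply sum_eq; intros i Hi; unfold h.
  replace (m + S i)%nat with (S m + i)%nat by lia.
  replace (S m - S i)%nat with (m - i)%nat by lia.
  replace (2 * S i)%nat with (S (2 * i + 1)) by lia. simpl; ring.
Qed.

Lemma fib_even_sum_S (x : R) (m : nat) :
  fib_even_sum x (S m) = fib_even_sum x m + x * fib_odd_sum x (S m).
Proof.
  unfold fib_odd_sum, fib_even_sum. rewrite tech5.
  rewrite (sum_eq _ (fun k => binom (S m + k) (m - k) * x ^ (2 * k + 1)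
                            + binom (S m + k) (S m - k) * x ^ (2 * k + 1))).
  2:{ intros i Hi. replace (S (S m) + i)%nat with (S (S m + i)) by lia.
      replace (S m - i)%nat with (S (m - i)) by lia. simpl binom; ring. }
  rewrite sum_plus, Rplus_assoc; f_equal.
  rewrite scal_sum, tech5; f_equal.
  - apply sum_eq; intros i Hi.
    replace (2 * i + 1)%nat with (S (2 * i)) by lia. simpl; ring.
  - replace (S m - S m)%nat with 0%nat by lia. rewrite !binom_n0.
    replace (2 * S m + 1)%nat with (S (2 * S m)) by lia. simpl; ring.
Qed.

(* Both sums obey the Fibonacci recursion, hence they are F_(2m+1) and
   F_(2m+2). *)
Lemma fibpoly_odd_even (x : R) (m : nat) :
  fibpoly x (2 * m + 1) = fib_odd_sum x m /\
  fibpoly x (2 * m + 2) = fib_even_sum x m.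
Proof.
  induction m as [|m [IHodd IHeven]].
  - unfold fib_odd_sum, fib_even_sum; simpl; split; ring.
  - assert (Hodd : fibpoly x (2 * S m + 1) = fib_odd_sum x (S m)).
    { replace (2 * S m + 1)%nat with (S (S (2 * m + 1))) by lia.
      rewrite fibpoly_SS, fib_odd_sum_S, <- IHodd, <- IHeven.
      replace (S (2 * m + 1)) with (2 * m + 2)%nat by lia; ring. }
    split; [exact Hodd|].
    replace (2 * S m + 2)%nat with (S (S (2 * m + 2))) by lia.
    rewrite fibpoly_SS, fib_even_sum_S, <- Hodd, <- IHeven.
    replace (S (2 * m + 2)) with (2 * S m + 1)%nat by lia; ring.
Qed.

Lemma Tm_fibpoly (m : nat) (x : R) : Tm m x = fibpoly x (2 * m + 1).
Proof.
  rewrite (proj1 (fibpoly_odd_even x m)).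
  unfold Tm, fib_odd_sum. apply sum_eq; intros i Hi.
  rewrite binom_C by lia; reflexivity.
Qed.

Lemma Qf_conj (m : nat) (a u v : R) :
  u * v = -1 -> u ^ 2 + v ^ 2 + 2 * a <> 0 ->
  Qf m a u = (v ^ 2) ^ S m / (u ^ 2 + v ^ 2 + 2 * a) ^ S m.
Proof.
  intros Huv HD. unfold Qf.
  set (D := u ^ 2 + v ^ 2 + 2 * a).
  assert (Hsq : u ^ 2 * v ^ 2 = 1)
    by (replace (u ^ 2 * v ^ 2) with ((u * v) ^ 2) by ring; rewrite Huv; ring).
  replace (u ^ 4 + 2 * a * u ^ 2 + 1) with (u ^ 2 * D)
    by (transitivity (u ^ 4 + 2 * a * u ^ 2 + u ^ 2 * v ^ 2);
        [unfold D; ring | rewrite Hsq; ring]).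
  assert (Hunit : (u ^ 2) ^ S m * (v ^ 2) ^ S m = 1).
  { rewrite <- Rpow_mult_distr, Hsq; apply pow1. }
  assert (Hu : (u ^ 2) ^ S m <> 0) by (intro Z; rewrite Z in Hunit; lra).
  assert (HDm : D ^ S m <> 0) by (apply pow_nonzero; exact HD).
  rewrite Rpow_mult_distr.
  replace ((v ^ 2) ^ S m) with (/ (u ^ 2) ^ S m)
    by (apply Rmult_eq_reg_l with ((u ^ 2) ^ S m); [rewrite Rinv_r|]; auto).
  field; split; assumption.
Qed.

Lemma conj_bracket (y s E : R) (n : nat) :
  (y + s) * (y - s) = -1 -> s <> 0 -> E <> 0 ->
  ((y - s) ^ (2 * n + 2) / E + (y + s) ^ (2 * n + 2) / E)
  + y / s * ((y - s) ^ (2 * n + 2) / E - (y + s) ^ (2 * n + 2) / E)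
  = ((y + s) ^ (2 * n + 1) - (y - s) ^ (2 * n + 1)) / (s * E).
Proof.
  intros Huv Hs HE.
  replace (2 * n + 2)%nat with (S (2 * n + 1)) by lia.
  rewrite <- !tech_pow_Rmult.
  set (p := (y + s) ^ (2 * n + 1)); set (q := (y - s) ^ (2 * n + 1)).
  replace (p - q) with (p * ((y + s) * (s - y)) + q * ((y - s) * (y + s)))
    by (replace ((y + s) * (s - y)) with (- ((y + s) * (y - s))) by ring;
        replace ((y - s) * (y + s)) with ((y + s) * (y - s)) by ring;
        rewrite Huv; ring).
  field; split; assumption.
Qed.

Theorem mainTheorem4 (m : nat) (a : R) (ha : -1 < a) (y : R) :
  Q1 m a y = Tm m (2 * y) / (2 ^ m * (1 + a + 2 * y ^ 2) ^ (S m)).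
Proof.
  unfold Q1; cbv zeta.
  assert (Hpos : 0 < y ^ 2 + 1) by (pose proof (pow2_ge_0 y); lra).
  pose proof (sqrt_lt_R0 _ Hpos) as Hs.
  pose proof (sqrt_sqrt _ (Rlt_le _ _ Hpos)) as Hss.
  set (s := sqrt (y ^ 2 + 1)) in *.
  set (W := 1 + a + 2 * y ^ 2).
  assert (HW : 0 < W) by (unfold W; pose proof (pow2_ge_0 y); lra).
  assert (Huv : (y + s) * (y - s) = -1) by (ring_simplify; nra).
  assert (HD : (y + s) ^ 2 + (y - s) ^ 2 + 2 * a = 2 * W) by (unfold W; nra).
  assert (HD' : (y - s) ^ 2 + (y + s) ^ 2 + 2 * a = 2 * W) by lra.
  rewrite (Qf_conj m a (y + s) (y - s)), (Qf_conj m a (y - s) (y + s)), HD, HD'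
    by lra.
  rewrite <- !pow_mult.
  replace (2 * S m)%nat with (2 * m + 2)%nat by lia.
  assert (HE : (2 * W) ^ S m <> 0) by (apply pow_nonzero; lra).
  rewrite conj_bracket, fibpoly_binet by lra.
  replace (y + s + (y - s)) with (2 * y) by ring.
  rewrite <- Tm_fibpoly, Rpow_mult_distr; simpl (2 ^ S m).
  field; repeat split; try lra; apply pow_nonzero; lra.
Qed.
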